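(* Let $b\ge 2$ be an integer. Every natural number that is antipalindromic in base $b$ and whose base-$b$ expansion has an even number of digits is divisible by $b-1$.
   Context: For an integer $b\ge 2$, every natural number $m$ has a unique base-$b$ expansion $m=a_nb^n+\dots+a_1b+a_0$ with $a_0,\dots,a_n\in\{0,1,\dots,b-1\}$ and $a_n\neq 0$ (it has $n+1$ digits). The number $m$ is antipalindromic in base $b$ if $a_j=b-1-a_{n-j}$ for all $j\in\{0,1,\dots,n\}$. *)

From mathcomp Require Import all_boot.
Set Implicit Arguments. Unset Strict Implicit. Unset Printing Implicit Defensive.

(* Base-b digits of m, least significant first: [:: a_0; a_1; ...; a_n],
   with a_n <> 0 when m > 0; digits b 0 = [::]. Fuel = m suffices for b >= 2. *)
Fixpoint digits_fuel (fuel b m : nat) : seq nat :=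
  match fuel with
  | 0 => [::]
  | fuel'.+1 => if m == 0 then [::] else (m %% b) :: digits_fuel fuel' b (m %/ b)
  end.

Definition digits (b m : nat) : seq nat := digits_fuel m b m.

Definition antipalindromic (b m : nat) : Prop :=
  let s := digits b m in
  forall j, j < size s -> nth 0 s j = b - 1 - nth 0 s ((size s).-1 - j).

Example digits_test : digits 10 1203 = [:: 3; 0; 2; 1]. Proof. by []. Qed.

(* Reading a number mod b - 1 is reading its digit sum, since b = 1 mod b - 1.
   In an antipalindromic expansion with n digits the digit in position j and
   its mirror image add up to b - 1, so twice the digit sum is n (b - 1); for
   even n the digit sum itself is (n / 2) (b - 1). *)

From mathcomp Require Import all_boot.
From mathcomp Require Import zify.

Definition from_digits (b : nat) (s : seq nat) : nat :=
  foldr (fun d acc => d + b * acc) 0 s.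

Lemma digits_fuel_ltn fuel b m :
  0 < b -> all (fun d => d < b) (digits_fuel fuel b m).
Proof.
move=> b_gt0; elim: fuel m => [|fuel IH] m //=.
by case: (m == 0) => //=; rewrite ltn_mod b_gt0 IH.
Qed.

Lemma digits_fuelK fuel {b m} :
  2 <= b -> m <= fuel -> from_digits b (digits_fuel fuel b m) = m.
Proof.
move=> b_ge2; elim: fuel m => [|fuel IH] m /=; first by rewrite leqn0 => /eqP->.
move=> m_le; have [->|m_neq0] //= := eqVneq m 0.
have quotient_lt : m %/ b < m by rewrite ltn_Pdiv // lt0n.
by rewrite IH; [rewrite mulnC addnC -divn_eq | lia].
Qed.

Lemma from_digits_modn b s : 0 < b -> from_digits b s = sumn s %[mod b.-1].
Proof.
case: b => [//|b] _; elim: s => [|d s IH] //=.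
by rewrite -modnDmr -[RHS]modnDmr mulSn [_ + b * _]addnC mulnC modnMDl IH addnC.
Qed.

Lemma sumnD_pairwise_const (c : nat) (s t : seq nat) :
  size s = size t -> (forall j, j < size s -> nth 0 s j + nth 0 t j = c) ->
  sumn s + sumn t = size s * c.
Proof.
elim: s t => [|x s IH] [|y t] //= [size_st] pair_c.
rewrite addnACA (pair_c 0) // (IH t) // => j j_lt.
exact: (pair_c j.+1).
Qed.

Lemma antipalindromic_digit_sum {b m} :
  2 <= b -> antipalindromic b m ->
  (sumn (digits b m)).*2 = size (digits b m) * (b - 1).
Proof.
rewrite /antipalindromic; set s := digits b m => b_ge2 anti.
have digit_ltn : all (fun d => d < b) s by apply: digits_fuel_ltn; lia.
rewrite -addnn -[X in _ + X]sumn_rev.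
apply: sumnD_pairwise_const; rewrite ?size_rev // => j j_lt.
have mirror_lt : (size s).-1 - j < size s by lia.
have := allP digit_ltn _ (mem_nth 0 mirror_lt).
rewrite nth_rev // anti //; have -> : size s - j.+1 = (size s).-1 - j by lia.
by move: (nth 0 s _) => d; lia.
Qed.

Theorem mainTheorem3 (b m : nat) :
  2 <= b -> antipalindromic b m -> ~~ odd (size (digits b m)) -> (b - 1) %| m.
Proof.
move=> b_ge2 anti /negbTE even_size.
have dvd_digit_sum : (b - 1) %| sumn (digits b m).
  move: (antipalindromic_digit_sum b_ge2 anti).
  rewrite -[size _]odd_double_half even_size add0n -!mul2n -mulnA.
  by move=> /eqP; rewrite eqn_mul2l /= => /eqP->; apply: dvdn_mull.
rewrite /dvdn -(digits_fuelK m b_ge2 (leqnn m)) -/(digits b m) subn1.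
by rewrite from_digits_modn ?modn_mod -?subn1 //; lia.
Qed.
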